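(* There exists a function $h(k,\Delta)$ with $h(k,\Delta)=\Theta\big((\Delta-1)^{k/12}\big)$ as $k\to\infty$ such that for all integers $\Delta$ and $k$, only finitely many (finite, simple, connected) graphs $G$ of maximum degree $\Delta$ satisfy $g_k(G)<h(k,\Delta)$.
   Context: For integers $k\geqslant 0$ and $\Delta$, let $f(k,\Delta)=\Delta\sum_{i=0}^{k-1}(\Delta-1)^i$ (the number of non-root nodes of a $\Delta$-ary tree of height $k$). For a graph $G$, its $k$-th power $G^k$ is the graph on $V(G)$ in which two distinct vertices are adjacent iff their distance in $G$ is at most $k$. $\chi$ denotes the chromatic number and $\Delta(G)$ the maximum degree of $G$. The $k$-gap of $G$ is $g_k(G)=f(k,\Delta(G))+1-\chi(G^k)$. *)

From mathcomp Require Import all_boot.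
From Stdlib Require Import Reals.

Set Implicit Arguments.
Unset Strict Implicit.
Unset Printing Implicit Defensive.

Definition simple_graph (V : finType) (e : rel V) : Prop :=
  symmetric e /\ irreflexive e.

Definition connected_graph (V : finType) (e : rel V) : Prop :=
  forall x y : V, connect e x y.

Definition deg (V : finType) (e : rel V) (x : V) : nat := #|[set y | e x y]|.
Definition maxdeg (V : finType) (e : rel V) : nat := \max_(x : V) deg e x.

Definition nbhd (V : finType) (e : rel V) (A : {set V}) : {set V} :=
  [set y | [exists x in A, e x y]].
Fixpoint within (V : finType) (e : rel V) (n : nat) (x : V) : {set V} :=
  match n with
  | 0 => [set x]
  | n'.+1 => within e n' x :|: nbhd e (within e n' x)
  end.

Definition gpow (V : finType) (e : rel V) (k : nat) : rel V :=
  fun x y => (x != y) && (y \in within e k x).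

Definition colorable (V : finType) (adj : rel V) (n : nat) : bool :=
  [exists c : {ffun V -> 'I_n}, [forall x, [forall y, adj x y ==> (c x != c y)]]].

Lemma colorable_card (V : finType) (adj : rel V) (irr : irreflexive adj) :
  exists n, colorable adj n.
Proof.
exists #|V|; apply/existsP; exists [ffun x => enum_rank x].
apply/forallP => x; apply/forallP => y; apply/implyP => Hxy.
rewrite !ffunE; apply/negP => /eqP /enum_rank_inj Exy.
by rewrite Exy irr in Hxy.
Qed.


Definition loopless (V : finType) (adj : rel V) : rel V :=
  fun x y => (x != y) && adj x y.

Lemma loopless_irr (V : finType) (adj : rel V) : irreflexive (loopless adj).
Proof. by move=> x; rewrite /loopless eqxx. Qed.

Definition chi (V : finType) (adj : rel V) : nat :=
  ex_minn (colorable_card (loopless_irr adj)).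

Definition f (k D : nat) : nat := D * \sum_(i < k) (D - 1) ^ i.

Definition gap (V : finType) (e : rel V) (k : nat) : R :=
  (INR (f k (maxdeg e) + 1) - INR (chi (gpow e k)))%R.

From Pilot Require Import Defs.
From mathcomp Require Import all_boot.
From Stdlib Require Import Reals Lra.
From mathcomp Require Import zify.
(* [Reals] exports a constant [f] that shadows the one of [Defs]. *)
Import Defs.

Set Implicit Arguments.
Unset Strict Implicit.
Unset Printing Implicit Defensive.

(* Colour G^k greedily, vertices farther from a root r first: a vertex then
   needs one colour more than the number of its neighbours in G^k that are at
   least as far from r, and a ball of radius k has at most f(k, D) vertices
   besides its centre.  Counting that ball along the tree of non-backtracking
   walks shows more: outside the s-ball around the end of a geodesic from its
   centre, the ball lacks a complete depth-s branch of that tree, of at least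
   (D - 1)^s vertices.  A vertex v farther than s from r thus has
   slack, since the s-ball around the point at distance s + 1 from v towards r
   is closer to r and is coloured after v.  For the vertices near r, pick zL
   and zR at distance k - 2s from r and more than k + 2s apart.  Either the
   s-ball around one of them is deficient, which again gives slack, or both
   s-balls are large; they then lie in the k-ball of every vertex near r and,
   being far apart, can be precoloured with the same g colours.  Every large
   connected graph contains such r, zL, zR with s = k/12 + 1, whence
   g_k(G) >= (D - 1)^(k/12). *)

Lemma card_bigcup_le (T I : finType) (P : pred I) (F : I -> {set T}) :
  #|\bigcup_(i | P i) F i| <= \sum_(i | P i) #|F i|.
Proof.
elim/big_rec2: _ => [|i A n _ IH]; first by rewrite cards0.
by rewrite (leq_trans (leq_card_setU _ _)) // leq_add2l.
Qed.

Lemma leq_sum_card_mul (I : finType) (C : {set I}) (F : I -> nat) b :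
  (forall i, i \in C -> F i <= b) -> \sum_(i in C) F i <= #|C| * b.
Proof. by move=> FC; rewrite -sum_nat_const leq_sum. Qed.

Lemma leq_sum_pivot (I : finType) (C : {set I}) (F : I -> nat) i0 b c :
  i0 \in C -> (forall i, i \in C -> F i <= b) -> F i0 + c <= b ->
  \sum_(i in C) F i + c <= #|C| * b.
Proof.
move=> Ci0 FC Fi0; rewrite (big_setD1 i0) // (cardsD1 i0 C) Ci0 add1n mulSn.
by rewrite addnAC leq_add // leq_sum_card_mul // => i /setD1P [_ /FC].
Qed.

Section Balls.
Variables (V : finType) (e : rel V).

Lemma withinP n x u :
  reflect (exists p, [/\ path e x p, last x p = u & size p <= n])
          (u \in within e n x).
Proof.
apply: (iffP idP).
  elim: n u => [|n IH] u /=; first by rewrite inE => /eqP ->; exists [::].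
  rewrite inE => /orP [/IH [p [Hp Hl Hs]]|]; first by exists p; rewrite ltnW.
  rewrite inE => /existsP [w /andP [/IH [p [Hp Hl Hs]] Hwu]].
  by exists (rcons p u); rewrite rcons_path last_rcons size_rcons Hp Hl Hwu.
elim: n u => [|n IH] u [p [Hp Hl Hs]] /=.
  by move: Hs; rewrite leqn0 => /nilP Hp0; rewrite inE -Hl Hp0.
rewrite inE; case: (leqP (size p) n) => Hsn; first by rewrite IH //; exists p.
move: Hp Hl Hs Hsn; case/lastP: p => [|p w] //.
rewrite rcons_path last_rcons size_rcons ltnS => /andP [Hp Hw] <- Hs _.
rewrite inE; apply/orP; right; apply/existsP; exists (last x p).
by rewrite Hw andbT IH //; exists p.
Qed.

Lemma within_refl n x : x \in within e n x.
Proof. by apply/withinP; exists [::]. Qed.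

Lemma within_mono m n x : m <= n -> within e m x \subset within e n x.
Proof.
move=> Hmn; apply/subsetP => u /withinP [p [Hp Hl Hs]].
by apply/withinP; exists p; split => //; apply: leq_trans Hmn.
Qed.

Lemma within_trans a b x w u :
  w \in within e a x -> u \in within e b w -> u \in within e (a + b) x.
Proof.
move=> /withinP [p [Hp <- Hs]] /withinP [q [Hq <- Hs']].
apply/withinP; exists (p ++ q); rewrite cat_path last_cat Hp Hq.
by rewrite size_cat leq_add.
Qed.

Lemma within_cons n x y u :
  e x y -> u \in within e n y -> u \in within e n.+1 x.
Proof.
move=> Hxy /withinP [p [Hp Hl Hs]]; apply/withinP; exists (y :: p).
by rewrite /= Hxy Hp.
Qed.

Hypothesis esym : symmetric e.

Lemma within_sym n x u : (u \in within e n x) = (x \in within e n u).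
Proof.
suff H y w : w \in within e n y -> y \in within e n w by apply/idP/idP; apply: H.
case/withinP=> p [Hp Hl Hs]; apply/withinP; exists (rev (belast y p)); split.
- by move: (rev_path e y p); rewrite Hl (eq_path (e' := e)) ?Hp //
     => a b /=; rewrite esym.
- by case: p {Hp Hs} Hl => [|z p] //= _; rewrite rev_cons last_rcons.
- by rewrite size_rev size_belast.
Qed.

End Balls.

(* The size of a rooted tree of depth [t] in which every node has [D - 1]
   children. *)
Definition branch_size (D t : nat) : nat := \sum_(i < t.+1) (D - 1) ^ i.

Lemma branch_size0 D : branch_size D 0 = 1.
Proof. by rewrite /branch_size big_ord1. Qed.

Lemma branch_sizeS D t : branch_size D t.+1 = 1 + (D - 1) * branch_size D t.
Proof. by rewrite /branch_size big_ord_recl big_distrr. Qed.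

Lemma leq_branch_size D s t : s <= t -> branch_size D s <= branch_size D t.
Proof.
move=> /subnKC <-; elim: (t - s) => [|d IH]; first by rewrite addn0.
rewrite addnS (leq_trans IH) // /branch_size [X in _ <= X]big_ord_recr.
exact: leq_addr.
Qed.

Lemma f_branch_size D t : f t.+1 D = D * branch_size D t.
Proof. by []. Qed.

Lemma branch_size_le_f D s k : 0 < D -> s < k -> branch_size D s <= f k D.
Proof.
move=> D0; case: k => [//|k]; rewrite ltnS f_branch_size => Hs.
by rewrite (leq_trans (leq_branch_size D Hs)) // leq_pmull.
Qed.

Lemma branch_size_pow D q : 2 <= D -> 2 * (D - 1) ^ q <= branch_size D q.+1.
Proof.
move=> HD; rewrite /branch_size !big_ord_recr /=.
have : (D - 1) ^ q <= (D - 1) * (D - 1) ^ q by apply: leq_pmull; rewrite subn_gt0.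
lia.
Qed.

Section Branches.
Variables (V : finType) (e : rel V).

Definition children (x y : V) : {set V} := [set z | e y z & z != x].

Fixpoint branch (t : nat) (x y : V) : {set V} :=
  if t is t'.+1 then y |: \bigcup_(z in children x y) branch t' y z else [set y].

Fixpoint nb_path (x y : V) (p : seq V) : bool :=
  if p is z :: p' then (z \in children x y) && nb_path y z p' else true.

Lemma children_edge x y z : z \in children x y -> e y z.
Proof. by rewrite inE => /andP []. Qed.

Lemma branch_root t x y : y \in branch t x y.
Proof. by case: t => [|t] /=; rewrite !inE eqxx. Qed.

Lemma nb_path_last_branch t x y p :
  nb_path x y p -> size p <= t -> last y p \in branch t x y.
Proof.
elim: p t x y => [|z p IH] t x y /=; first by rewrite branch_root.
case: t => [|t] // /andP [Hz Hp] Hs /=; rewrite in_setU1; apply/orP; right.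
by apply/bigcupP; exists z => //; apply: IH.
Qed.

Lemma card_branchS_setD t x y (A : {set V}) :
  #|branch t.+1 x y :\: A| <=
    (y \notin A) + \sum_(z in children x y) #|branch t y z :\: A|.
Proof.
rewrite /= setDUl (leq_trans (leq_card_setU _ _)) // leq_add //.
  have [yA|_] := boolP (y \in A).
    by rewrite leqn0 cards_eq0 setD_eq0 sub1set.
  by rewrite /= -(cards1 y) subset_leq_card ?subsetDl.
apply: leq_trans (card_bigcup_le _ _); apply: subset_leq_card.
apply/subsetP => u; rewrite inE => /andP [uA /bigcupP [z Hz Hu]].
by apply/bigcupP; exists z; rewrite // inE uA.
Qed.

Variable D : nat.
Hypothesis degD : forall x, deg e x <= D.

Lemma card_children_root x : #|children x x| <= D.
Proof.
apply: leq_trans (degD x); apply: subset_leq_card.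
by apply/subsetP => z; rewrite !inE => /andP [].
Qed.

Hypothesis esym : symmetric e.

Lemma card_children x y : e x y -> #|children x y| <= D - 1.
Proof.
move=> Hxy; have := degD y; rewrite /deg (cardsD1 x) inE esym Hxy.
suff: #|children x y| <= #|[set z | e y z] :\ x| by lia.
by apply: subset_leq_card; apply/subsetP => z; rewrite !inE andbC.
Qed.

Lemma card_branch t x y : e x y -> #|branch t x y| <= branch_size D t.
Proof.
elim: t x y => [|t IH] x y Hxy; first by rewrite cards1 branch_size0.
rewrite -[branch _ _ _]setD0 (leq_trans (card_branchS_setD _ _ _ _)) //.
rewrite inE branch_sizeS leq_add2l.
apply: leq_trans (leq_sum_card_mul (b := branch_size D t) _) _.
  by move=> z /children_edge Hyz; rewrite setD0 IH.
by rewrite leq_mul2r card_children ?orbT.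
Qed.

Lemma card_branch_root k v : #|branch k v v :\ v| <= f k D.
Proof.
case: k => [|k]; first by rewrite setDv cards0.
rewrite (leq_trans (card_branchS_setD _ _ _ _)) // inE eqxx add0n f_branch_size.
apply: leq_trans (leq_sum_card_mul (b := branch_size D k) _) _.
  move=> z /children_edge Hvz.
  by rewrite (leq_trans _ (card_branch _ Hvz)) // subset_leq_card ?subsetDl.
by rewrite leq_mul2r card_children_root orbT.
Qed.

(* The s-ball around the end of a non-backtracking path contains a complete
   depth-s subtree of the branch, so removing it frees [branch_size D s]. *)
Lemma card_branch_setD t x y p s (A : {set V}) :
  e x y -> nb_path x y p -> size p + s <= t ->
  within e s (last y p) \subset A ->
  #|branch t x y :\: A| + branch_size D s <= branch_size D t.
Proof.
elim: t x y p s => [|t IH] x y p s Hxy Hp Hs HA.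
  case: p Hp Hs HA => //= _ Hs; have -> : s = 0 by lia.
  by rewrite -setD_eq0 => /eqP ->; rewrite cards0.
have Hstep := card_branchS_setD t x y A.
have HC : #|children x y| * branch_size D t <= (D - 1) * branch_size D t.
  by rewrite leq_mul2r card_children ?orbT.
have Hbranch z : z \in children x y -> #|branch t y z :\: A| <= branch_size D t.
  move=> /children_edge Hyz.
  by rewrite (leq_trans _ (card_branch t Hyz)) // subset_leq_card ?subsetDl.
rewrite branch_sizeS.
case: p Hp Hs HA => [|z p]; last first.
  case/andP=> Hz Hp Hs HA; rewrite /= in Hs HA; have Hyz := children_edge Hz.
  have := leq_sum_pivot Hz Hbranch (IH y z p s Hyz Hp Hs HA).
  by case: (y \notin A) Hstep; lia.
move=> _ Hs HA; rewrite (subsetP HA _ (within_refl _ _ _)) add0n in Hstep.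
case: s Hs HA => [|s] Hs HA.
  by have := leq_sum_card_mul Hbranch; rewrite branch_size0; lia.
have Hchild z : z \in children x y ->
    #|branch t y z :\: A| <= branch_size D t - branch_size D s.
  move=> Hz; have Hyz := children_edge Hz.
  suff: #|branch t y z :\: A| + branch_size D s <= branch_size D t by lia.
  apply: (IH y z [::] s Hyz) => //=.
  by apply: subset_trans HA; apply/subsetP => u; apply: within_cons.
have := leq_sum_card_mul Hchild.
have : #|children x y| * (branch_size D t - branch_size D s) <=
       (D - 1) * (branch_size D t - branch_size D s).
  by rewrite leq_mul2r card_children ?orbT.
have : (D - 1) * branch_size D s <= (D - 1) * branch_size D t.
  by rewrite leq_mul2l leq_branch_size ?orbT //; move: Hs => /=; lia.
rewrite branch_sizeS mulnBr; lia.
Qed.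

Lemma card_branch_root_setD k v y p s (A : {set V}) :
  y \in children v v -> nb_path v y p -> size p + s <= k ->
  within e s (last y p) \subset A ->
  #|branch k.+1 v v :\: (v |: A)| + branch_size D s <= f k.+1 D.
Proof.
move=> Hy Hp Hs HA.
have := card_branchS_setD k v v (v |: A); rewrite setU11 add0n => Hstep.
have Hbranch z : z \in children v v ->
    #|branch k v z :\: (v |: A)| <= branch_size D k.
  move=> /children_edge Hvz.
  by rewrite (leq_trans _ (card_branch k Hvz)) // subset_leq_card ?subsetDl.
have Hy' : #|branch k v y :\: (v |: A)| + branch_size D s <= branch_size D k.
  apply: leq_trans (card_branch_setD (children_edge Hy) Hp Hs HA).
  by rewrite leq_add2r subset_leq_card // setDS // subsetUr.
have := leq_sum_pivot Hy Hbranch Hy'.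
have : #|children v v| * branch_size D k <= D * branch_size D k.
  by rewrite leq_mul2r card_children_root orbT.
rewrite f_branch_size; lia.
Qed.

End Branches.

Section Distance.
Variables (V : finType) (e : rel V).
Hypothesis econn : connected_graph e.

Lemma dist_ex x u : exists n, u \in within e n x.
Proof.
have /connectP [p Hp Hl] := econn x u.
by exists (size p); apply/withinP; exists p.
Qed.

Definition dist x u := ex_minn (dist_ex x u).

Lemma within_dist n x u : (u \in within e n x) = (dist x u <= n).
Proof.
rewrite /dist; case: ex_minnP => m Hm Hmin; apply/idP/idP; first exact: Hmin.
by move=> Hmn; apply: (subsetP (within_mono e x Hmn)).
Qed.

Lemma dist_path x p : path e x p -> dist x (last x p) <= size p.
Proof. by move=> Hp; rewrite -within_dist; apply/withinP; exists p. Qed.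

Lemma dist_triangle x y z : dist x z <= dist x y + dist y z.
Proof.
by rewrite -within_dist; apply: (@within_trans _ _ _ _ _ y); rewrite within_dist.
Qed.

Lemma dist_eq0 x y : (dist x y == 0) = (x == y).
Proof. by rewrite -leqn0 -within_dist inE eq_sym. Qed.

Lemma dist_sym : symmetric e -> forall x y, dist x y = dist y x.
Proof.
move=> esym x y; apply/eqP; rewrite eqn_leq -!within_dist.
rewrite (within_sym esym) [in X in _ && X](within_sym esym).
by rewrite !within_dist !leqnn.
Qed.

Definition geodesic x p := path e x p && (size p == dist x (last x p)).

Lemma geodesic_exists x u : exists2 p, geodesic x p & last x p = u.
Proof.
have /withinP : u \in within e (dist x u) x by rewrite within_dist.
case=> p [Hp Hl Hs]; exists p => //; rewrite /geodesic Hp Hl eqn_leq Hs.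
by rewrite -Hl dist_path.
Qed.

Lemma geodesic_cat x p q :
  geodesic x (p ++ q) -> geodesic x p && geodesic (last x p) q.
Proof.
rewrite /geodesic cat_path last_cat size_cat => /andP [/andP [Hp Hq] /eqP Hs].
rewrite Hp Hq /=; have := dist_path Hp; have := dist_path Hq.
have := dist_triangle x (last x p) (last (last x p) q); lia.
Qed.

Lemma geodesic_nb_path x y p : geodesic x (y :: p) -> nb_path e x y p.
Proof.
elim: p x y => [|z p IH] x y //= Hg.
have /andP [_ Hyz] := geodesic_cat (p := [:: y]) Hg.
rewrite IH // inE andbC; have /andP [/and3P [Hxy Hyz' Hp] Hs] := Hg.
rewrite Hyz' /=; apply/eqP => Ezx; subst z.
by move: Hs (dist_path Hp) => /= /eqP; lia.
Qed.

Lemma dist_between x w m :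
  m <= dist x w -> exists y, dist x y = m /\ dist y w = dist x w - m.
Proof.
have [p Hg <-] := geodesic_exists x w.
have /andP [_ /eqP Hs] := Hg; rewrite -Hs => Hm.
have := @geodesic_cat x (take m p) (drop m p); rewrite cat_take_drop.
case/(_ Hg)/andP=> /andP [_ /eqP Ht] /andP [_ /eqP Hd].
have -> : last x p = last (last x (take m p)) (drop m p).
  by rewrite -last_cat cat_take_drop.
exists (last x (take m p)); rewrite -Ht -Hd size_take size_drop.
by case: ltnP Hm => //; lia.
Qed.

End Distance.

Section BallBounds.
Variables (V : finType) (e : rel V).
Hypotheses (esym : symmetric e) (eirr : irreflexive e).
Hypothesis econn : connected_graph e.
Variable D : nat.
Hypothesis degD : forall x, deg e x <= D.

Notation dist := (dist econn).
Notation geodesic := (geodesic econn).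

Lemma geodesic_children v y p : geodesic v (y :: p) -> y \in children e v v.
Proof.
case/andP=> /andP [Hvy _] _; rewrite inE Hvy.
by apply: contraTneq Hvy => ->; rewrite eirr.
Qed.

Lemma within_sub_branch k v : within e k v \subset branch e k v v.
Proof.
apply/subsetP => u; rewrite (within_dist econn).
have [[|y p] Hg <-] := geodesic_exists econn v u; first by rewrite branch_root.
have /andP [_ /eqP <-] := Hg; case: k => [|k] //= Hk.
rewrite in_setU1; apply/orP; right; apply/bigcupP; exists y.
  exact: geodesic_children Hg.
exact: nb_path_last_branch (geodesic_nb_path Hg) Hk.
Qed.

Lemma card_ball k v : #|within e k v :\ v| <= f k D.
Proof.
apply: leq_trans (card_branch_root degD esym k v).
by apply/subset_leq_card/setSD/within_sub_branch.
Qed.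

Lemma card_ball_setD k v z s (A : {set V}) :
  v != z -> dist v z + s <= k -> within e s z \subset A ->
  #|within e k v :\: (v |: A)| + branch_size D s <= f k D.
Proof.
move=> Hvz Hk HA.
have [[|y p] Hg Hl] := geodesic_exists econn v z.
  by rewrite -Hl eqxx in Hvz.
have /andP [_ /eqP Hs] := Hg; rewrite -Hl -Hs /= in Hk HA.
case: k Hk => [//|k] Hk.
apply: leq_trans (card_branch_root_setD degD esym (geodesic_children Hg)
                    (geodesic_nb_path Hg) _ HA); last by rewrite -ltnS.
by rewrite leq_add2r; apply/subset_leq_card/setSD/within_sub_branch.
Qed.

End BallBounds.

Section Colouring.
Variables (V : finType) (adj : rel V).
Hypotheses (asym : symmetric adj) (airr : irreflexive adj).

Lemma colour_extend n (c : {ffun V -> 'I_n.+1}) (T : {set V}) w :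
  w \notin T -> {in T &, forall x y, adj x y -> c x != c y} ->
  #|c @: [set u in T | adj w u]| <= n ->
  exists c' : {ffun V -> 'I_n.+1},
    {in T, c' =1 c} /\ {in w |: T &, forall x y, adj x y -> c' x != c' y}.
Proof.
move=> wT Hc HF.
have /subsetPn [col _ Hcol] :
    ~~ ([set: 'I_n.+1] \subset c @: [set u in T | adj w u]).
  apply/negP => /subset_leq_card; rewrite cardsT card_ord.
  by move/leq_trans/(_ HF); rewrite ltnn.
have Tw u : u \in T -> (u == w) = false.
  by move=> uT; apply: contraNF wT => /eqP <-.
exists [ffun x => if x == w then col else c x]; split.
  by move=> x xT; rewrite ffunE Tw.
have Fcol u : u \in T -> adj w u -> col != c u.
  by move=> uT Hwu; apply: contraNneq Hcol => ->; rewrite imset_f // inE uT.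
move=> x y /setU1P Hx /setU1P Hy Hxy; rewrite !ffunE.
case: Hx Hy Hxy => [->|xT] [->|yT].
- by rewrite airr.
- by rewrite eqxx Tw //; apply: Fcol.
- by rewrite eqxx Tw // eq_sym asym; apply: Fcol.
- by rewrite !Tw //; apply: Hc.
Qed.

Lemma greedy_colorable n (Q : {set V}) (c0 : V -> 'I_n.+1) (rho : V -> nat) :
  {in Q &, forall x y, adj x y -> c0 x != c0 y} ->
  (forall v, v \notin Q ->
     #|c0 @: [set u in Q | adj v u]| +
     #|[set u | adj v u & (u \notin Q) && (rho v <= rho u)]| <= n) ->
  colorable adj n.+1.
Proof.
move=> HQ Hb.
suff [c [_ Hc]] : exists c : {ffun V -> 'I_n.+1},
    {in Q, c =1 c0} /\ {in Q :|: ~: Q &, forall x y, adj x y -> c x != c y}.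
  apply/existsP; exists c; apply/forallP => x; apply/forallP => y.
  by apply/implyP; apply: Hc; rewrite setUCr inE.
suff main m (S : {set V}) : #|S| <= m -> [disjoint S & Q] ->
    exists c : {ffun V -> 'I_n.+1},
      {in Q, c =1 c0} /\ {in Q :|: S &, forall x y, adj x y -> c x != c y}.
  by apply: (main #|~: Q|) => //; rewrite disjoints_subset.
elim: m S => [|m IH] S HS Hdis.
  move: HS; rewrite leqn0 cards_eq0 => /eqP ->; exists [ffun x => c0 x].
  by split=> [x _|x y]; rewrite ?setU0 !ffunE //; apply: HQ.
have [/eqP S0|/set0Pn [w0 Hw0]] := boolP (S == set0).
  by apply: IH; rewrite // S0 cards0.
case: (arg_minnP rho Hw0) => w wS0 wmin; have wS : w \in S := wS0.
have wQ : w \notin Q by rewrite (disjointFr Hdis).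
have [c [cQ Hc]] : exists c : {ffun V -> 'I_n.+1}, {in Q, c =1 c0} /\
    {in Q :|: S :\ w &, forall x y, adj x y -> c x != c y}.
  apply: IH; first by move: HS; rewrite (cardsD1 w) wS.
  by apply: disjointWl Hdis; apply: subsetDl.
have wT : w \notin Q :|: S :\ w by rewrite !inE eqxx (negbTE wQ).
have HF : #|c @: [set u in Q :|: S :\ w | adj w u]| <= n.
  apply: leq_trans (Hb w wQ).
  set N := [set u | adj w u & _].
  apply: leq_trans (leq_trans (leq_card_setU _ (c @: N))
                              (leq_add (leqnn _) (leq_imset_card c N))).
  apply/subset_leq_card/subsetP => col /imsetP [u].
  rewrite !inE => /andP [/orP [uQ|/andP [_ uS]] Hwu] ->; apply/orP.
    by left; rewrite cQ // imset_f // inE uQ Hwu.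
  by right; rewrite imset_f // inE Hwu (disjointFr Hdis uS) wmin.
have [c' [c'c Hc']] := colour_extend wT Hc HF.
exists c'; split => [x xQ|]; first by rewrite c'c ?cQ // inE xQ.
by rewrite setUCA setD1K in Hc'.
Qed.

Lemma colorable_degeneracy n (rho : V -> nat) :
  (forall v, #|[set u | adj v u & rho v <= rho u]| <= n) -> colorable adj n.+1.
Proof.
move=> Hb; apply: (@greedy_colorable n set0 (fun=> ord0) rho) => [x y|v _].
  by rewrite inE.
rewrite (_ : [set u in set0 | adj v u] = set0) ?imset0 ?cards0; last first.
  by apply/setP => u; rewrite !inE.
by apply: leq_trans (Hb v); apply/subset_leq_card/subsetP => u; rewrite !inE.
Qed.

Lemma precolour_far_sets n g (X Y : {set V}) :
  g <= n.+1 -> g <= #|X| -> g <= #|Y| -> [disjoint X & Y] ->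
  {in X & Y, forall x y, ~~ adj x y} ->
  exists (Q : {set V}) (c0 : V -> 'I_n.+1),
    [/\ Q \subset X :|: Y, 2 * g <= #|Q|, #|c0 @: Q| <= g
      & {in Q &, forall x y, adj x y -> c0 x != c0 y}].
Proof.
move=> Hgn /card_geqP [sX [uX szX sXX]] /card_geqP [sY [uY szY sYY]].
move=> Hdis Hfar.
pose idx u := if u \in sX then index u sX else index u sY.
have idx_lt u : u \in sX ++ sY -> idx u < g.
  rewrite /idx mem_cat; case: ifP => [uX' _|_ /= uY'].
    by rewrite -szX index_mem.
  by rewrite -szY index_mem.
exists [set u in sX ++ sY], (fun u => inord (idx u)); split.
- apply/subsetP => u; rewrite inE mem_cat !inE.
  by case/orP=> [/sXX ->|/sYY ->]; rewrite ?orbT.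
- have Huniq : uniq (sX ++ sY).
    rewrite cat_uniq uX uY andbT /=; apply/hasPn => u /sYY uY'.
    by apply: contraL uY' => /sXX uX'; rewrite (disjointFr Hdis uX').
  by rewrite cardsE (card_uniqP Huniq) size_cat szX szY mul2n addnn.
- apply: leq_trans (subset_leq_card (_ : _ \subset [set inord i | i : 'I_g])) _.
    apply/subsetP => col /imsetP [u]; rewrite inE => /idx_lt Hu ->.
    by apply/imsetP; exists (Ordinal Hu).
  by rewrite (leq_trans (leq_imset_card _ _)) // card_ord.
- move=> x y; rewrite !inE => Hx Hy.
  apply: contraTneq => /(congr1 (@nat_of_ord _)).
  rewrite !inordK ?(leq_trans (idx_lt _ _) Hgn) // /idx.
  have inY u : u \in sX ++ sY -> u \notin sX -> u \in sY.
    by rewrite mem_cat => /orP [->|].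
  case: ifP => xX; case: ifP => yX Hi.
  + by rewrite (index_inj x xX yX Hi) airr.
  + by apply: Hfar; [apply: sXX | apply: sYY; rewrite inY ?yX].
  + by rewrite asym; apply: Hfar; [apply: sXX | apply: sYY; rewrite inY ?xX].
  + have xY := inY x Hx (negbT xX); have yY := inY y Hy (negbT yX).
    by rewrite (index_inj x xY yY Hi) airr.
Qed.

Lemma chi_le n : colorable (loopless adj) n -> chi adj <= n.
Proof. by rewrite /chi; case: ex_minnP => m _ H /H. Qed.

End Colouring.

Section PowerColouring.
Variables (V : finType) (e : rel V).
Hypotheses (esym : symmetric e) (eirr : irreflexive e).
Hypothesis econn : connected_graph e.
Variables (D k : nat).
Hypothesis degD : forall x, deg e x <= D.

Notation dist := (dist econn).
Notation adj := (loopless (gpow e k)).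

Lemma adjE v u : adj v u = (v != u) && (dist v u <= k).
Proof. by rewrite /loopless /gpow andbA andbb within_dist. Qed.

Lemma adj_sym : symmetric adj.
Proof. by move=> x y; rewrite !adjE eq_sym (dist_sym econn esym). Qed.

Lemma card_adj v : #|[set u | adj v u]| <= f k D.
Proof.
apply: leq_trans (card_ball esym eirr econn degD k v).
by apply/subset_leq_card/subsetP => u; rewrite !inE adjE within_dist eq_sym.
Qed.

Lemma card_adj_near v z s :
  v != z -> dist v z + s <= k ->
  #|[set u | adj v u]| + branch_size D s <= f k D + #|within e s z|.
Proof.
move=> Hvz Hk; have := card_ball_setD esym eirr degD Hvz Hk (subxx _).
suff: #|[set u | adj v u]| <=
      #|within e k v :\: (v |: within e s z)| + #|within e s z| by lia.
apply: leq_trans (leq_card_setU _ _); apply/subset_leq_card/subsetP => u.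
rewrite inE adjE => /andP [Hvu Hu].
rewrite in_setU in_setD in_setU1 (within_dist econn k v) Hu.
rewrite (eq_sym u) (negbTE Hvu).
by case: (u \in within e s z).
Qed.

Lemma card_adj_far r v s :
  s < dist r v -> s.+1 + s <= k ->
  #|[set u | adj v u & dist r v <= dist r u]| + branch_size D s <= f k D.
Proof.
move=> Hs Hk; rewrite (dist_sym econn esym) in Hs.
have [z [Hvz Hzr]] := dist_between Hs.
have Hz : v != z by rewrite -(dist_eq0 econn) Hvz.
have HA : within e s z \subset [set u | dist r u < dist r v].
  apply/subsetP => u; rewrite within_dist inE => Hu.
  have := dist_triangle econn r z u; rewrite (dist_sym econn esym r z) Hzr.
  rewrite (dist_sym econn esym r v); lia.
have Hk' : dist v z + s <= k by rewrite Hvz.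
apply: leq_trans (card_ball_setD esym eirr degD Hz Hk' HA).
rewrite leq_add2r; apply/subset_leq_card/subsetP => u.
rewrite !inE adjE negb_or -leqNgt (within_dist econn k v).
by case/andP=> /andP [Hvu ->] ->; rewrite eq_sym Hvu.
Qed.

Lemma chi_gpow_le : chi (gpow e k) <= f k D + 1.
Proof.
rewrite addn1; apply/chi_le.
apply: (colorable_degeneracy adj_sym (loopless_irr _) (rho := fun=> 0)) => v.
apply: leq_trans (card_adj v).
by apply/subset_leq_card/subsetP => u; rewrite !inE => /andP [].
Qed.

Lemma colorable_deficient r z s g :
  g <= branch_size D s -> s.+1 + s <= k ->
  s < dist r z -> dist r z + s + s <= k ->
  #|within e s z| + g <= branch_size D s -> colorable adj (f k D - g).+1.
Proof.
move=> Hg Hk Hz Hzk Hdef.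
apply: (colorable_degeneracy adj_sym (loopless_irr _) (rho := dist r)) => v.
have [Hv|Hv] := leqP (dist r v) s; last by have := card_adj_far Hv Hk; lia.
have Hvz : v != z by apply: contraTneq Hz => <-; rewrite -leqNgt.
have Hk' : dist v z + s <= k.
  by have := dist_triangle econn v r z; rewrite (dist_sym econn esym v r); lia.
have := card_adj_near Hvz Hk'.
have : #|[set u | adj v u & dist r v <= dist r u]| <= #|[set u | adj v u]|.
  by apply/subset_leq_card/subsetP => u; rewrite !inE => /andP [].
lia.
Qed.

Lemma colorable_far_balls r zL zR s g :
  2 * g <= branch_size D s -> branch_size D s <= f k D -> s.+1 + s <= k ->
  dist r zL + s + s <= k -> dist r zR + s + s <= k -> k + s + s < dist zL zR ->
  g <= #|within e s zL| -> g <= #|within e s zR| -> colorable adj (f k D - g).+1.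
Proof.
move=> Hg HsD Hk HL HR Hfar HgL HgR; have dC := dist_sym econn esym.
have far u u' : u \in within e s zL -> u' \in within e s zR -> k < dist u u'.
  rewrite !within_dist => Hu Hu'; have := dist_triangle econn zL u zR.
  by have := dist_triangle econn u u' zR; rewrite (dC u' zR); lia.
have near v z u : dist r v <= s -> dist r z + s + s <= k ->
    u \in within e s z -> dist v u <= k.
  rewrite within_dist (dC r v) => Hv Hz Hu.
  have := dist_triangle econn v r u; have := dist_triangle econn r z u; lia.
have [|||Q [c0 [QLR HQ Hcol Hc0]]] :=
  precolour_far_sets adj_sym (loopless_irr _) (n := f k D - g) _ HgL HgR.
- by lia.
- rewrite disjoints_subset; apply/subsetP => u HuL; rewrite inE.
  apply/negP => HuR; have := far u u HuL HuR.
  by have /eqP -> : dist u u == 0 by rewrite dist_eq0.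
- by move=> u u' Hu Hu'; rewrite adjE negb_and -ltnNge far ?orbT.
apply: (greedy_colorable adj_sym (loopless_irr _) (rho := dist r) Hc0) => v vQ.
have Hc : #|c0 @: [set u in Q | adj v u]| <= g.
  apply/(leq_trans _ Hcol)/subset_leq_card/imsetS/subsetP => u.
  by rewrite inE => /andP [].
have [Hv|Hv] := leqP (dist r v) s; last first.
  have := card_adj_far Hv Hk.
  have : #|[set u | adj v u & (u \notin Q) && (dist r v <= dist r u)]| <=
         #|[set u | adj v u & dist r v <= dist r u]|.
    by apply/subset_leq_card/subsetP => u; rewrite !inE => /and3P [-> _ ->].
  lia.
have QN : Q \subset [set u | adj v u].
  apply/subsetP => u uQ; rewrite inE adjE; apply/andP; split.
    by apply: contraNneq vQ => ->.
  case/setUP: (subsetP QLR u uQ) => Hu; first exact: (near _ zL).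
  exact: (near _ zR).
have : #|[set u | adj v u & (u \notin Q) && (dist r v <= dist r u)]| <=
       #|[set u | adj v u] :\: Q|.
  by apply/subset_leq_card/subsetP => u; rewrite !inE => /and3P [-> -> _].
rewrite cardsD (setIidPr QN); have := card_adj v; lia.
Qed.

Lemma chi_gpow_gap r zL zR s g :
  0 < D -> 2 * g <= branch_size D s -> s.+1 + s <= k ->
  dist r zL + s + s <= k -> dist r zR + s + s <= k -> k + s + s < dist zL zR ->
  chi (gpow e k) + g <= f k D + 1.
Proof.
move=> D0 Hg Hk HL HR Hfar.
have HsD : branch_size D s <= f k D by apply: branch_size_le_f; lia.
suff Hc : colorable adj (f k D - g).+1 by have := chi_le Hc; lia.
have := dist_triangle econn zL r zR; rewrite (dist_sym econn esym zL r) => Htri.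
have [HdL|HgL] := leqP (#|within e s zL| + g) (branch_size D s).
  by apply: (colorable_deficient (r := r)) HdL; lia.
have [HdR|HgR] := leqP (#|within e s zR| + g) (branch_size D s).
  by apply: (colorable_deficient (r := r)) HdR; lia.
by apply: (colorable_far_balls (r := r) Hg HsD Hk HL HR Hfar); lia.
Qed.

Lemma exists_far_vertex x n : (f n D).+1 < #|V| -> exists w, n < dist x w.
Proof.
move=> HV; have /subsetPn [w _ Hw] : ~~ ([set: V] \subset within e n x).
  apply/negP => /subset_leq_card; rewrite cardsT (cardsD1 x) within_refl.
  by have := card_ball esym eirr econn degD n x; lia.
by exists w; rewrite ltnNge -within_dist.
Qed.

Lemma chi_gpow_gap_large s g :
  0 < D -> 2 * g <= branch_size D s -> 6 * s < k -> (f (2 * k) D).+1 < #|V| ->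
  chi (gpow e k) + g <= f k D + 1.
Proof.
move=> D0 Hg Hs HV.
have /card_gt0P [x _] : 0 < #|V| by lia.
have [w Hw] := exists_far_vertex x HV.
have Hw' : 2 * (k - 2 * s) <= dist x w by lia.
have [z [Hxz _]] := dist_between Hw'.
have Hz : k - 2 * s <= dist x z by lia.
have [r [Hxr Hrz]] := dist_between Hz.
apply: (chi_gpow_gap (r := r) (zL := x) (zR := z) D0 Hg);
  rewrite ?(dist_sym econn esym r x) ?Hxr ?Hrz ?Hxz; lia.
Qed.

End PowerColouring.

Definition gap_bound (k D : nat) : nat :=
  if (6 * (k %/ 12).+1 < k) && (2 <= D) then (D - 1) ^ (k %/ 12) else 0.

Lemma chi_gpow_gap_bound (V : finType) (e : rel V) k :
  simple_graph e -> connected_graph e -> (f (2 * k) (maxdeg e)).+1 < #|V| ->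
  chi (gpow e k) + gap_bound k (maxdeg e) <= f k (maxdeg e) + 1.
Proof.
move=> [esym eirr] econn HV; have degD x : deg e x <= maxdeg e := leq_bigmax x.
rewrite /gap_bound; case: ifP => [/andP [Hk HD]|_].
  by apply: (chi_gpow_gap_large esym eirr econn degD _ (branch_size_pow _ HD));
     lia.
by rewrite addn0 (chi_gpow_le esym eirr econn k degD).
Qed.

Lemma gap_ge (V : finType) (e : rel V) k g :
  chi (gpow e k) + g <= f k (maxdeg e) + 1 -> (INR g <= gap e k)%R.
Proof. by move/leP/le_INR; rewrite /gap !plus_INR; lra. Qed.

Lemma Rpower_divn_bounds (x : R) (k m : nat) : (1 <= x)%R -> 0 < m ->
  (x ^ (k %/ m) <= Rpower x (INR k / INR m) <= x * x ^ (k %/ m))%R.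
Proof.
move=> Hx Hm; have x0 : (0 < x)%R by lra.
have Hm' : (0 < INR m)%R by apply: lt_0_INR; apply/ltP.
have -> : (INR k / INR m = INR (k %/ m) + INR (k %% m) / INR m)%R.
  by rewrite {1}(divn_eq k m) plus_INR mult_INR; field; lra.
have Hfrac0 : (0 <= INR (k %% m) / INR m)%R.
  by apply: Rmult_le_pos; [apply: pos_INR | apply/Rlt_le/Rinv_0_lt_compat].
have Hfrac1 : (INR (k %% m) / INR m <= 1)%R.
  have : (INR (k %% m) <= INR m)%R by apply/le_INR/leP; rewrite ltnW // ltn_pmod.
  move=> Hkm; apply: (Rmult_le_reg_r (INR m)) => //.
  by rewrite /Rdiv Rmult_assoc Rinv_l ?Rmult_1_r; lra.
rewrite Rpower_plus Rpower_pow //.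
have := Rle_Rpower _ _ _ Hx Hfrac0; have := Rle_Rpower _ _ _ Hx Hfrac1.
rewrite Rpower_O // Rpower_1 //.
have : (0 < x ^ (k %/ m))%R by apply: pow_lt.
nra.
Qed.

Lemma gap_bound_Theta D : (2 <= D)%N ->
  exists c1 c2 : R, (0 < c1)%R /\ (0 < c2)%R /\
  exists K : nat, forall k : nat, (K <= k)%N ->
    (c1 * Rpower (INR (D - 1)) (INR k / 12) <= INR (gap_bound k D))%R /\
    (INR (gap_bound k D) <= c2 * Rpower (INR (D - 1)) (INR k / 12))%R.
Proof.
move=> HD; have Hx : (1 <= INR (D - 1))%R by apply/(le_INR 1)/leP; lia.
exists (/ INR (D - 1))%R, 1%R; split; first by apply: Rinv_0_lt_compat; lra.
split; first lra.
exists 13 => k Hk; rewrite /gap_bound (_ : 6 * _ < k) ?HD ?pow_INR; last by lia.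
have [Hlo Hhi] := Rpower_divn_bounds k Hx (isT : 0 < 12).
rewrite (_ : INR 12 = 12%R) in Hlo Hhi; last by rewrite /=; lra.
split; last lra.
apply: (Rmult_le_reg_l (INR (D - 1))); first lra.
by rewrite -Rmult_assoc Rinv_r ?Rmult_1_l; lra.
Qed.

Theorem theorem5 :
  exists h : nat -> nat -> R,
    (* h(k, D) = Theta((D-1)^(k/12)) as k -> oo, for each fixed D >= 2 *)
    (forall D : nat, (2 <= D)%N ->
       exists c1 c2 : R, (0 < c1)%R /\ (0 < c2)%R /\
       exists K : nat, forall k : nat, (K <= k)%N ->
         (c1 * Rpower (INR (D - 1)) (INR k / 12) <= h k D)%R /\
         (h k D <= c2 * Rpower (INR (D - 1)) (INR k / 12))%R) /\
    (* only finitely many connected simple graphs G with Delta(G) = D have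
       g_k(G) < h(k, D): their orders are bounded *)
    (forall D k : nat, exists N : nat,
       forall (V : finType) (e : rel V),
         simple_graph e -> connected_graph e -> maxdeg e = D ->
         (gap e k < h k D)%R -> (#|V| <= N)%N).
Proof.
exists (fun k D => INR (gap_bound k D)); split; first exact: gap_bound_Theta.
move=> D k; exists (f (2 * k) D).+1 => V e Hs Hc HD Hgap.
rewrite leqNgt; apply/negP; rewrite -HD => HV.
have := gap_ge (chi_gpow_gap_bound Hs Hc HV); rewrite HD; lra.
Qed.
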